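(* Let $\mathcal{C}$ be a class of ontologies, $D$ a database, $\Pi=(\Sigma_{hg},\Sigma_{\mathcal{C}})$ a $\mathcal{C}$-dyadic pair of TGDs, and $q(\mathbf{x})$ a conjunctive query. Let $D^{+}=D\cup\mathrm{grAt}(D,\Pi)$. Then $\mathrm{cert}(q,D,\Sigma_{hg}\cup\Sigma_{\mathcal{C}})=\mathrm{cert}(q,D^{+},\Sigma_{\mathcal{C}})$.
   Context: Standard setting: constants, nulls, variables; atoms, databases (finite sets of facts), instances. A TGD is $\sigma:\Phi(\mathbf{x},\mathbf{y})\to\exists\mathbf{z}\,\Psi(\mathbf{x},\mathbf{z})$; $\mathbf{z}$ are existential variables, $\mathbf{x}=\mathrm{front}(\sigma)$ frontier variables; an ontology is a finite set of TGDs; a datalog rule is a TGD without existential variables and with a single head atom; $\mathsf{Datalog}$ is the class of ontologies of datalog rules. Certain answers $\mathrm{cert}(q,D,\Sigma)$ of a CQ $q$ is the intersection of $q(M)$ over all models $M\supseteq D$ of $\Sigma$. $\mathrm{chase}(D,\Sigma)$ is the (unique, nulls determined by triggers) result of the chase, a universal model. $\mathrm{hdpred}(\Sigma)$ / $\mathrm{bdpred}(\Sigma)$ denote the predicates occurring in heads / bodies of rules of $\Sigma$. Positions: $P[i]$ is the $i$-th argument position of predicate $P$. For an ontology $\Sigma$ and existential variable $z$ of $\Sigma$, a position $\pi$ is $z$-affected if either some rule has $z$ in its head at $\pi$, or some rule has a frontier variable $x$ occurring in its head at $\pi$ and occurring in its body only at $z$-affected positions. $\mathrm{aff}(\pi)$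 is the set of existential variables $z$ such that $\pi$ is $z$-affected. A body variable $x$ of a rule, occurring in the body at positions $\pi_1,\dots,\pi_n$, is harmless if $\bigcap_i\mathrm{aff}(\pi_i)=\emptyset$, otherwise harmful; a harmful frontier variable is dangerous. A set $\Sigma'\subseteq\Sigma$ is head-ground w.r.t. $\Sigma$ if: (1) $\Sigma'\in\mathsf{Datalog}$; (2) every head atom of $\Sigma'$ contains only variables that are harmless w.r.t. $\Sigma$; (3) $\mathrm{hdpred}(\Sigma')\cap\mathrm{bdpred}(\Sigma')=\emptyset$; (4) $\mathrm{hdpred}(\Sigma')\cap\mathrm{hdpred}(\Sigma\setminus\Sigma')=\emptyset$. A pair $\Pi=(\Sigma_{hg},\Sigma_{\mathcal{C}})$ of ontologies is $\mathcal{C}$-dyadic if $\Sigma_{hg}$ is head-ground w.r.t. $\Sigma_{hg}\cup\Sigma_{\mathcal{C}}$ and $\Sigma_{\mathcal{C}}\in\mathcal{C}$. Define $\mathrm{grAt}(D,\Pi)=\{a\in\mathrm{chase}(D,\Sigma_{hg}\cup\Sigma_{\mathcal{C}}) : \text{the predicate of } a \text{ is in } \mathrm{hdpred}(\Sigma_{hg})\}$. *)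

From mathcomp Require Import all_boot.
From Stdlib Require List.

Set Implicit Arguments.
Unset Strict Implicit.
Unset Printing Implicit Defensive.

(* Parameters: C = constants, V = variables, P = predicate symbols,
   ar = arity of each predicate (the schema). *)
Section TGDs.
Variables (C V P : eqType) (ar : P -> nat).

Inductive rterm := RVar of V | RConst of C.

Record ratom := RAtom { rpred : P; rargs : seq rterm }.

(* A TGD  body(x,y) -> exists z. head(x,z).  The existential variables are the
   head variables that do not occur in the body; the frontier variables are
   the head variables that occur in the body. *)
Record tgd := TGD { body : seq ratom; head : seq ratom }.

Definition ontology := seq tgd.

Definition rvars_of (a : ratom) : seq V :=
  pmap (fun t => if t is RVar v then Some v else None) (rargs a).

Definition atoms_vars (l : seq ratom) : seq V := undup (flatten (map rvars_of l)).

Definition bvars (s : tgd) : seq V := atoms_vars (body s).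
Definition hvars (s : tgd) : seq V := atoms_vars (head s).
Definition evars (s : tgd) : seq V := [seq v <- hvars s | v \notin bvars s].
Definition front (s : tgd) : seq V := [seq v <- hvars s | v \in bvars s].

Definition is_datalog (s : tgd) : Prop := evars s = [::] /\ size (head s) = 1%N.
Definition Datalog (S : ontology) : Prop := forall s, List.In s S -> is_datalog s.

(* conjunctive query q(x) = exists y. atoms; ansvars = x *)
Record cq := CQ { ansvars : seq V; qatoms : seq ratom }.

(* A null is named by the
   trigger that creates it: the rule, the images of the body variables of the
   rule (in the canonical order [bvars]), and the existential variable. *)
Inductive term := TConst of C | TNull of tgd & seq term & V.

Record atom := Atom { apred : P; aargs : seq term }.

Definition instance := atom -> Prop.

Definition fact := (P * seq C)%type.
Definition database := seq fact.

Definition fact_atom (f : fact) : atom := Atom f.1 (map TConst f.2).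

Definition db_inst (D : database) : instance :=
  fun a => exists f, List.In f D /\ a = fact_atom f.

Definition wf_ratom (a : ratom) : Prop := size (rargs a) = ar (rpred a).
Definition wf_atom (a : atom) : Prop := size (aargs a) = ar (apred a).
Definition wf_db (D : database) : Prop := forall f, List.In f D -> size f.2 = ar f.1.
Definition wf_ont (S : ontology) : Prop :=
  forall s, List.In s S ->
    (forall a, List.In a (body s) -> wf_ratom a) /\
    (forall a, List.In a (head s) -> wf_ratom a).
Definition wf_cq (q : cq) : Prop :=
  (forall a, List.In a (qatoms q) -> wf_ratom a) /\
  (forall x, x \in ansvars q -> x \in atoms_vars (qatoms q)).

Definition rsubst (h : V -> term) (t : rterm) : term :=
  match t with RVar v => h v | RConst c => TConst c end.

Definition asubst (h : V -> term) (a : ratom) : atom :=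
  Atom (rpred a) (map (rsubst h) (rargs a)).

Definition sat (M : instance) (s : tgd) : Prop :=
  forall h : V -> term,
    (forall b, List.In b (body s) -> M (asubst h b)) ->
    exists h' : V -> term,
      (forall v, v \in bvars s -> h' v = h v) /\
      (forall a, List.In a (head s) -> M (asubst h' a)).

Definition model (I : instance) (S : ontology) (M : instance) : Prop :=
  (forall a, M a -> wf_atom a) /\
  (forall a, I a -> M a) /\
  (forall s, List.In s S -> sat M s).

Definition qans (q : cq) (M : instance) (t : seq term) : Prop :=
  exists h : V -> term, map h (ansvars q) = t /\
    (forall a, List.In a (qatoms q) -> M (asubst h a)).

Definition cert (q : cq) (I : instance) (S : ontology) (t : seq term) : Prop :=
  forall M, model I S M -> qans q M t.

(** * The chase (oblivious; nulls determined by triggers) *)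

Definition trigger_ext (s : tgd) (h : V -> term) (v : V) : term :=
  if v \in evars s then TNull s (map h (bvars s)) v else h v.

Inductive chase (I : instance) (S : ontology) : atom -> Prop :=
| chase_base a : I a -> chase I S a
| chase_step s (h : V -> term) a :
    List.In s S ->
    (forall b, List.In b (body s) -> chase I S (asubst h b)) ->
    List.In a (head s) ->
    chase I S (asubst (trigger_ext s h) a).

Definition hdpredS (S : tgd -> Prop) (p : P) : Prop :=
  exists s a, S s /\ List.In a (head s) /\ rpred a = p.
Definition hdpred (S : ontology) (p : P) : Prop := hdpredS (fun s => List.In s S) p.
Definition bdpred (S : ontology) (p : P) : Prop :=
  exists s a, List.In s S /\ List.In a (body s) /\ rpred a = p.

Definition position := (P * nat)%type.

Definition occurs_at (l : seq ratom) (x : V) (pi : position) : Prop :=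
  exists a i, List.In a l /\ List.nth_error (rargs a) i = Some (RVar x) /\
              pi = (rpred a, i).

Definition exvar := (tgd * V)%type.
Definition is_exvar (S : ontology) (z : exvar) : Prop :=
  List.In z.1 S /\ z.2 \in evars z.1.

Inductive affected (S : ontology) (z : exvar) : position -> Prop :=
| aff_ex pi :
    is_exvar S z -> occurs_at (head z.1) z.2 pi -> affected S z pi
| aff_prop s x pi :
    List.In s S -> x \in front s -> occurs_at (head s) x pi ->
    (forall pi', occurs_at (body s) x pi' -> affected S z pi') ->
    affected S z pi.

Definition harmless (S : ontology) (s : tgd) (x : V) : Prop :=
  ~ exists z, is_exvar S z /\
      (forall pi, occurs_at (body s) x pi -> affected S z pi).

Definition head_ground (S' S : ontology) : Prop :=
  (forall s, List.In s S' -> List.In s S) /\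
  Datalog S' /\
  (forall s, List.In s S' -> forall x, x \in hvars s -> harmless S s x) /\
  (forall p, hdpred S' p -> ~ bdpred S' p) /\
  (forall p, hdpred S' p ->
     ~ hdpredS (fun s => List.In s S /\ ~ List.In s S') p).

Definition dyadic (Cls : ontology -> Prop) (Shg SC : ontology) : Prop :=
  head_ground Shg (Shg ++ SC) /\ Cls SC.

Definition grAt (D : database) (Shg SC : ontology) : instance :=
  fun a => chase (db_inst D) (Shg ++ SC) a /\ hdpred Shg (apred a).

Definition Dplus (D : database) (Shg SC : ontology) : instance :=
  fun a => db_inst D a \/ grAt D Shg SC a.

End TGDs.

From mathcomp Require Import all_boot.
From Stdlib Require List.
From Stdlib Require Import Classical_Prop ClassicalEpsilon.
(* imported last so that its  head  (of a rule) shadows  seq.head *)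

Set Implicit Arguments.
Unset Strict Implicit.
Unset Printing Implicit Defensive.

(* The argument runs through the chase K = chase(D, Σhg ∪ ΣC).
   1. K is a model of D and Σhg ∪ ΣC.
   2. For every instance M there is a term map  h_M  fixing constants (built by
      choice, trigger by trigger) that sends every chase atom into M, provided
      M contains the base instance and each rule is either satisfied by M or
      already has all its chase consequences mapped into M.
   3. Labelled nulls of the chase only sit at positions affected by their
      existential variable; since head-ground rules carry harmless variables
      only, the atoms of grAt(D, Π) are ground.
   4. Certain answers over a ground instance are tuples of constants: a null
      in an answer could be renamed away in an isomorphic copy of a model.
   Both inclusions then follow: a model M of D ∪ grAt and ΣC receives K via
   h_M (Σhg-consequences are ground atoms of grAt, hence in M), and h_M fixes
   the constant answer tuples; conversely a model of D and Σhg ∪ ΣC receives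
   K, hence contains the ground atoms of grAt. *)

Section DyadicRewriting.
Variables (C V P : eqType) (ar : P -> nat).
Local Notation term := (term C V P).
Local Notation atom := (atom C V P).
Local Notation ratom := (ratom C V P).
Local Notation tgd := (tgd C V P).
Local Notation ontology := (ontology C V P).
Local Notation instance := (instance C V P).
Local Notation TConst := (TConst V P).

Lemma In_mem (T : eqType) (x : T) (l : seq T) : List.In x l -> x \in l.
Proof. by elim: l => [|y l IH] //= [->|/IH Hx]; rewrite inE ?eqxx ?Hx ?orbT. Qed.

Lemma rvars_nth (a : ratom) (x : V) :
  x \in rvars_of a <-> exists i, List.nth_error (rargs a) i = Some (RVar C x).
Proof.
case: a => p args; rewrite /rvars_of /=.
elim: args => [|[y|c] args IH] /=; first by split => // [[[|i]]].
- rewrite inE; split.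
  + by case/orP => [/eqP->|/IH [i Hi]]; [exists 0 | exists i.+1].
  + case=> [[|i]] /= Hi; first by case: Hi => ->; rewrite eqxx.
    by apply/orP; right; apply/IH; exists i.
- split; first by case/IH => i Hi; exists i.+1.
  by case=> [[|i]] //= Hi; apply/IH; exists i.
Qed.

Lemma atoms_vars_nth (l : seq ratom) (x : V) :
  x \in atoms_vars l <->
  exists a i, List.In a l /\ List.nth_error (rargs a) i = Some (RVar C x).
Proof.
rewrite /atoms_vars mem_undup; elim: l => [|b l IH] /=.
  by split => // -[a [i [[]]]].
rewrite mem_cat; split.
- case/orP => [/rvars_nth [i Hi]|/IH [a [i [Ha Hi]]]]; first by exists b, i; auto.
  by exists a, i; auto.
- case=> a [i [[<-|Ha] Hi]]; apply/orP; first by left; apply/rvars_nth; exists i.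
  by right; apply/IH; exists a, i.
Qed.

Lemma head_hvars (s : tgd) (a : ratom) (i : nat) (x : V) :
  List.In a (head s) -> List.nth_error (rargs a) i = Some (RVar C x) ->
  x \in hvars s.
Proof. by move=> Ha Hi; apply/atoms_vars_nth; exists a, i. Qed.

Lemma hvars_bvars (s : tgd) (v : V) :
  v \in hvars s -> v \notin evars s -> v \in bvars s.
Proof. by move=> Hh; rewrite mem_filter Hh andbT negbK. Qed.

Lemma trigger_ext_body (s : tgd) (h : V -> term) (v : V) :
  v \in bvars s -> trigger_ext s h v = h v.
Proof. by move=> Hv; rewrite /trigger_ext mem_filter Hv. Qed.

Lemma asubst_nth (h : V -> term) (a : ratom) (i : nat) (x : V) :
  List.nth_error (rargs a) i = Some (RVar C x) ->
  List.nth_error (aargs (asubst h a)) i = Some (h x).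
Proof. by move=> Hi; rewrite /asubst /= List.nth_error_map Hi. Qed.

Lemma asubst_ext (h1 h2 : V -> term) (a : ratom) :
  (forall x, x \in rvars_of a -> h1 x = h2 x) -> asubst h1 a = asubst h2 a.
Proof.
move=> Heq; rewrite /asubst; congr Atom; apply: List.map_ext_in => -[x|c] //= Hx.
by apply: Heq; apply/rvars_nth; apply: List.In_nth_error.
Qed.

Definition amap (g : term -> term) (a : atom) : atom :=
  Atom (apred a) (map g (aargs a)).

Definition fixes_consts (g : term -> term) : Prop := forall c, g (TConst c) = TConst c.

Definition ground (a : atom) : Prop :=
  forall x, List.In x (aargs a) -> exists c, x = TConst c.

Lemma amap_asubst (g : term -> term) (h : V -> term) (a : ratom) :
  fixes_consts g -> amap g (asubst h a) = asubst (fun v => g (h v)) a.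
Proof.
move=> Hg; rewrite /amap /asubst /=; congr Atom.
by rewrite -map_comp; apply: eq_map => -[y|c] /=; rewrite ?Hg.
Qed.

Lemma map_fix_ground (g : term -> term) (t : seq term) :
  fixes_consts g -> (forall x, List.In x t -> exists c, x = TConst c) -> map g t = t.
Proof.
move=> Hg; elim: t => [|x t IH] Ht //=.
have [c ->] := Ht x (or_introl erefl).
by rewrite Hg IH // => y Hy; apply: Ht; right.
Qed.

Lemma amap_ground (g : term -> term) (a : atom) :
  fixes_consts g -> ground a -> amap g a = a.
Proof. by case: a => p l Hg Hl; rewrite /amap /= map_fix_ground. Qed.

Lemma db_inst_ground (D : database C P) (a : atom) : db_inst D a -> ground a.
Proof.
move=> [f [_ ->]] x /List.in_map_iff [c [<- _]]; by exists c.
Qed.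

Lemma chase_model (I : instance) (S : ontology) :
  (forall a, I a -> wf_atom ar a) -> wf_ont ar S -> model ar I S (chase I S).
Proof.
move=> HI HS; split; last split.
- move=> a; elim => {a} [a Ha|s h a Hs _ _ Ha]; first exact: HI.
  by rewrite /wf_atom /asubst /= size_map; exact: ((HS s Hs).2 a Ha).
- by move=> a Ha; apply: chase_base.
- move=> s Hs h Hb; exists (trigger_ext s h); split.
  + exact: trigger_ext_body.
  + by move=> a Ha; apply: chase_step.
Qed.

Section ChaseHom.
Variable M : instance.

(* the assignment of the body variables of  s  encoded by the null label  us *)
Definition body_asgn (s : tgd) (us : seq term) (v : V) : term :=
  nth (TNull s us v) us (index v (bvars s)).

Definition head_match (s : tgd) (us : seq term) (h' : V -> term) : Prop :=
  (forall v, v \in bvars s -> h' v = body_asgn s us v) /\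
  (forall a, List.In a (head s) -> M (asubst h' a)).

Definition choose_match (s : tgd) (us : seq term) : V -> term :=
  epsilon (inhabits (fun w => TNull s us w)) (head_match s us).

(* the homomorphism: constants are fixed, a null created by a trigger goes to
   the witness that  M  chooses for the image of that trigger *)
Fixpoint chase_hom (t : term) : term :=
  if t is TNull s ts v then choose_match s (map chase_hom ts) v else t.

Lemma chase_hom_consts : fixes_consts chase_hom.
Proof. by []. Qed.

Lemma body_asgn_map (s : tgd) (h : V -> term) (v : V) :
  v \in bvars s ->
  body_asgn s (map chase_hom (map h (bvars s))) v = chase_hom (h v).
Proof.
move=> Hv; rewrite /body_asgn (nth_map (h v)) ?size_map ?index_mem //.
by rewrite (nth_map v) ?index_mem // nth_index.
Qed.

Lemma chase_hom_step (s : tgd) (h : V -> term) (a : ratom) :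
  sat M s ->
  (forall b, List.In b (body s) -> M (amap chase_hom (asubst h b))) ->
  List.In a (head s) -> M (amap chase_hom (asubst (trigger_ext s h) a)).
Proof.
move=> Hsat Hb Ha; set us := map chase_hom (map h (bvars s)).
have Hmatch : exists h', head_match s us h'.
  suff Hbody b : List.In b (body s) -> M (asubst (body_asgn s us) b).
    by have [h' Hh'] := Hsat _ Hbody; exists h'.
  move=> Hbb; rewrite (asubst_ext (h2 := fun v => chase_hom (h v))) -?amap_asubst //.
    exact: Hb.
  move=> x /rvars_nth [i Hi]; apply: body_asgn_map.
  by apply/atoms_vars_nth; exists b, i.
have [Hext Hhead] := epsilon_spec (inhabits (fun w => TNull s us w)) _ Hmatch.
rewrite amap_asubst // (asubst_ext (h2 := choose_match s us)); first exact: Hhead.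
move=> x /rvars_nth [i Hi]; have Hh := head_hvars Ha Hi.
rewrite /trigger_ext; case: ifP => //= Hev.
have Hbx : x \in bvars s by rewrite hvars_bvars ?Hev.
by rewrite /choose_match Hext // body_asgn_map.
Qed.

Lemma chase_hom_into (J : instance) (S : ontology) :
  (forall a, J a -> M (amap chase_hom a)) ->
  (forall s, List.In s S -> sat M s \/
     forall h a, List.In a (head s) -> chase J S (asubst (trigger_ext s h) a) ->
       M (amap chase_hom (asubst (trigger_ext s h) a))) ->
  forall a, chase J S a -> M (amap chase_hom a).
Proof.
move=> HJ Hrules a; elim => {a} [a Ha|s h a Hs Hb IH Ha]; first exact: HJ.
case: (Hrules s Hs) => [Hsat|Hcons]; first exact: chase_hom_step.
by apply: Hcons => //; apply: chase_step.
Qed.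

End ChaseHom.

Lemma chase_null_affected (I : instance) (S : ontology) (a : atom) :
  (forall b, I b -> ground b) -> chase I S a ->
  forall i s0 ts v, List.nth_error (aargs a) i = Some (TNull s0 ts v) ->
  is_exvar S (s0, v) /\ affected S (s0, v) (apred a, i).
Proof.
move=> HI; elim => {a} [a Ha|s h a Hs Hb IH Ha] i s0 ts v Hi.
  by have [c Hc] := HI a Ha _ (List.nth_error_In _ _ Hi).
move: Hi; rewrite /asubst /= List.nth_error_map.
case Hai: (List.nth_error (rargs a) i) => [[x|c]|] //= [].
rewrite /trigger_ext; case: ifP => Hev Hx.
  case: Hx => <- _ <-; have Hex : is_exvar S (s, x) by [].
  by split => //; apply: aff_ex => //; exists a, i.
have Hbx : x \in bvars s by rewrite hvars_bvars ?Hev // (head_hvars Ha Hai).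
have Hbody b j : List.In b (body s) -> List.nth_error (rargs b) j = Some (RVar C x) ->
    is_exvar S (s0, v) /\ affected S (s0, v) (rpred b, j).
  by move=> Hbb Hj; apply: (IH b Hbb j s0 ts); rewrite (asubst_nth h Hj) Hx.
have [b [j [Hbb Hj]]] := proj1 (atoms_vars_nth _ _) Hbx.
split; first exact: (Hbody b j Hbb Hj).1.
apply: (aff_prop (s := s) (x := x)) => //.
- by rewrite /front mem_filter Hbx (head_hvars Ha Hai).
- by exists a, i.
- by move=> pi [b' [j' [Hb' [Hj' ->]]]]; exact: (Hbody b' j' Hb' Hj').2.
Qed.

(* a chase atom over a head predicate of a head-ground set is ground: it was
   produced by a datalog rule of that set, whose variables are harmless and
   therefore cannot be bound to nulls *)
Lemma head_ground_atom_ground (I : instance) (Shg S : ontology) (a : atom) :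
  head_ground Shg S -> (forall b, I b -> ground b) ->
  chase I S a -> hdpred Shg (apred a) -> ground a.
Proof.
move=> [_ [Hdl [Hharm [_ Hown]]]] HI Hch; case: Hch => [a' Ha' _|s h a' Hs Hb Ha Hp]; first exact: HI.
have [HsShg|HsOut] := classic (List.In s Shg); last first.
  by case: (Hown _ Hp); exists s, a'.
move=> x /List.in_map_iff [[y|c] [<- Hy]]; last by exists c.
have [i Hi] := List.In_nth_error _ _ Hy.
have Hhy := head_hvars Ha Hi.
rewrite /= /trigger_ext (proj1 (Hdl s HsShg)) in_nil.
case Ehy: (h y) => [c|s0 ts v]; first by exists c.
case: (Hharm s HsShg y Hhy); exists (s0, v).
have Hby : y \in bvars s by rewrite hvars_bvars // (proj1 (Hdl s HsShg)).
have Hnull b j : List.In b (body s) -> List.nth_error (rargs b) j = Some (RVar C y) ->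
    is_exvar S (s0, v) /\ affected S (s0, v) (rpred b, j).
  move=> Hbb Hj; apply: (chase_null_affected HI (Hb b Hbb) (ts := ts)).
  by rewrite (asubst_nth h Hj) Ehy.
have [b [j [Hbb Hj]]] := proj1 (atoms_vars_nth _ _) Hby.
split; first exact: (Hnull b j Hbb Hj).1.
by move=> pi [b' [j' [Hb' [Hj' ->]]]]; exact: (Hnull b' j' Hb' Hj').2.
Qed.

Section Renaming.
(* injective renaming of every null into one avoiding the null  TNull s0 ts0 v0 *)
Variables (s0 : tgd) (ts0 : seq term) (v0 : V).

Definition ren (x : term) : term :=
  if x is TNull _ _ _ then TNull s0 (rcons ts0 x) v0 else x.
Definition unren (y : term) : term :=
  if y is TNull _ ts _ then last y ts else y.

Lemma renK : cancel ren unren.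
Proof. by case=> [c|s ts v] //=; rewrite last_rcons. Qed.

Lemma ren_avoids (x : term) : ren x <> TNull s0 ts0 v0.
Proof.
case: x => [c|s ts v] //= [] /(congr1 size); rewrite size_rcons.
by elim: (size ts0) => // n IH [].
Qed.

Lemma amap_ren_inj : injective (amap ren).
Proof. by move=> [p l] [p' l'] [-> /(inj_map (can_inj renK)) ->]. Qed.

Definition ren_inst (K : instance) : instance :=
  fun a => exists a0, K a0 /\ a = amap ren a0.

Lemma ren_inst_model (I : instance) (S : ontology) (K : instance) :
  model ar I S K -> (forall a, I a -> ground a) -> model ar I S (ren_inst K).
Proof.
move=> [Hwf [HIK Hsat]] HI; split; last split.
- by move=> a [a0 [Ha0 ->]]; rewrite /wf_atom /amap /= size_map; exact: Hwf.
- by move=> a Ha; exists a; rewrite amap_ground ?HI; auto.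
move=> s Hs h Hb; pose h0 v := unren (h v).
have Hh0 v : v \in bvars s -> ren (h0 v) = h v.
  case/atoms_vars_nth => b [i [Hbb Hi]]; have [a0 [_ E]] := Hb b Hbb.
  move: (congr1 (fun a => List.nth_error (aargs a) i) E).
  rewrite (asubst_nth h Hi) /amap /= List.nth_error_map.
  by case: (List.nth_error (aargs a0) i) => [y|] //= [Ehy]; rewrite /h0 Ehy renK.
have Hbody b : List.In b (body s) -> K (asubst h0 b).
  move=> Hbb; have [a0 [Ha0 E]] := Hb b Hbb.
  suff -> : asubst h0 b = a0 by [].
  apply: amap_ren_inj; rewrite -E amap_asubst //; apply: asubst_ext => x.
  by case/rvars_nth => i Hi; apply: Hh0; apply/atoms_vars_nth; exists b, i.
have [h' [Hext Hhead]] := Hsat s Hs h0 Hbody.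
exists (fun v => ren (h' v)); split; first by move=> v Hv; rewrite Hext // Hh0.
by move=> a Ha; exists (asubst h' a); rewrite amap_asubst //; auto.
Qed.

End Renaming.

(* if  I  is ground and has some model, a certain answer contains no null:
   the renamed copy of the model is still a model but avoids that null *)
Lemma cert_ground_answer (I : instance) (S : ontology) (q : cq C V P) (K : instance)
    (t : seq term) :
  model ar I S K -> (forall a, I a -> ground a) -> wf_cq ar q ->
  cert ar q I S t -> forall x, List.In x t -> exists c, x = TConst c.
Proof.
move=> HK HI [_ Hq] Hcert [c|s0 ts0 v0] Hx; first by exists c.
have [hq [Ht Hat]] := Hcert _ (ren_inst_model s0 ts0 v0 HK HI).
move: Hx; rewrite -Ht => /List.in_map_iff [y [Ey Hy]].
have [a [i [Ha Hi]]] := proj1 (atoms_vars_nth _ _) (Hq y (In_mem Hy)).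
have [a0 [_ E]] := Hat a Ha.
move: (congr1 (fun a => List.nth_error (aargs a) i) E).
rewrite (asubst_nth hq Hi) Ey /amap /= List.nth_error_map.
by case: (List.nth_error (aargs a0) i) => [z|] //= [] /esym /ren_avoids.
Qed.

Section Dyadic.
Variables (Cls : ontology -> Prop) (D : database C P) (Shg SC : ontology).
Hypotheses (HD : wf_db ar D) (HS : wf_ont ar (Shg ++ SC)) (Hdy : dyadic Cls Shg SC).

Lemma db_inst_wf (a : atom) : db_inst D a -> wf_atom ar a.
Proof. by move=> [f [Hf ->]]; rewrite /wf_atom /= size_map; exact: HD. Qed.

Lemma grAt_ground (a : atom) : grAt D Shg SC a -> ground a.
Proof. by case=> Hch Hp; apply: (head_ground_atom_ground Hdy.1 (@db_inst_ground D) Hch Hp). Qed.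

Lemma chase_into_Dplus_model (M : instance) :
  model ar (Dplus D Shg SC) SC M ->
  forall a, chase (db_inst D) (Shg ++ SC) a -> M (amap (chase_hom M) a).
Proof.
move=> [_ [HMI HMsat]]; apply: chase_hom_into.
  by move=> a Ha; rewrite (amap_ground (chase_hom_consts M) (db_inst_ground Ha)); apply: HMI; left.
move=> s Hs; case: (List.in_app_or _ _ _ Hs) => [HsShg|HsSC]; last by left; apply: HMsat.
right=> h a Ha Hch; have Hgr : grAt D Shg SC (asubst (trigger_ext s h) a).
  by split => //; exists s, a.
by rewrite (amap_ground (chase_hom_consts M) (grAt_ground Hgr)); apply: HMI; right.
Qed.

Lemma model_Dplus (M : instance) :
  model ar (db_inst D) (Shg ++ SC) M -> model ar (Dplus D Shg SC) SC M.
Proof.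
move=> [HMwf [HMI HMsat]]; split => //; split.
  move=> a [Ha|Ha]; first exact: HMI.
  rewrite -(amap_ground (chase_hom_consts M) (grAt_ground Ha)).
  apply: (chase_hom_into (S := Shg ++ SC)) (proj1 Ha).
    by move=> b Hb; rewrite (amap_ground (chase_hom_consts M) (db_inst_ground Hb)); apply: HMI.
  by move=> s Hs; left; apply: HMsat.
by move=> s Hs; apply: HMsat; apply: List.in_or_app; right.
Qed.

Lemma cert_to_Dplus (q : cq C V P) (t : seq term) :
  wf_cq ar q -> cert ar q (db_inst D) (Shg ++ SC) t -> cert ar q (Dplus D Shg SC) SC t.
Proof.
move=> Hq Hcert M HM; have HK := chase_model db_inst_wf HS.
have Hconst := cert_ground_answer HK (@db_inst_ground D) Hq Hcert.
have [hK [Ht Hat]] := Hcert _ HK.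
exists (fun v => chase_hom M (hK v)); split.
  by rewrite map_comp Ht (map_fix_ground (chase_hom_consts M) Hconst).
move=> a Ha; rewrite -(amap_asubst _ _ (chase_hom_consts M)).
exact: (chase_into_Dplus_model HM (Hat a Ha)).
Qed.

Lemma cert_from_Dplus (q : cq C V P) (t : seq term) :
  cert ar q (Dplus D Shg SC) SC t -> cert ar q (db_inst D) (Shg ++ SC) t.
Proof. by move=> Hcert M HM; apply: Hcert; apply: model_Dplus. Qed.

End Dyadic.
End DyadicRewriting.

Theorem mainTheorem3
  (C V P : eqType) (ar : P -> nat)
  (Cls : ontology C V P -> Prop)
  (D : database C P) (Shg SC : ontology C V P) (q : cq C V P) :
  wf_db ar D -> wf_ont ar (Shg ++ SC) -> wf_cq ar q ->
  dyadic Cls Shg SC ->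
  forall t : seq (term C V P),
    cert ar q (@db_inst C V P D) (Shg ++ SC) t <->
    cert ar q (Dplus D Shg SC) SC t.
Proof.
move=> HD HS Hq Hdy t; split.
- exact: (cert_to_Dplus HD HS Hdy Hq).
- exact: (cert_from_Dplus (ar := ar) Hdy).
Qed.
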